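(* Let $n\ge 0$ and let $\Lambda,V\subset\mathbb C$ be domains such that $E^n\colon\Lambda\to V$ is a conformal isomorphism. Suppose there is $\xi>1$ with $\Re z>\xi$ for all $z\in V$, that $|(E^n)'(\kappa)|>2$ for all $\kappa\in\Lambda$, and that $V$ is convex and contained in a horizontal strip of height $\pi/2$. Then $E^{n+1}\colon\Lambda\to E^{n+1}(\Lambda)$ is a conformal isomorphism with \[|(E^{n+1})'(\kappa)|>e^\xi|(E^n)'(\kappa)|-1>2|(E^n)'(\kappa)|\] for all $\kappa\in\Lambda$, and $E^{n,n+1}\colon V\to E^{n+1}(\Lambda)$ is a conformal isomorphism with $|(E^{n,n+1})'(z)|>e^\xi-1$ for all $z\in V$.
   Context: For $\kappa\in\mathbb C$ let $E_\kappa(z)=e^z+\kappa$ and $E^n(\kappa):=E_\kappa^{\circ n}(\kappa)$, an entire function of $\kappa$; $(E^n)'$ denotes its derivative with respect to $\kappa$. If $E^n\colon\Lambda\to V$ is a conformal isomorphism, then for $k\ge0$ one defines the holomorphic map $E^{n,n+k}:=E^{n+k}\circ(E^n)^{-1}\colon V\to\mathbb C$; in particular $E^{n,n+1}(z)=e^z+\kappa$ where $\kappa=(E^n)^{-1}(z)$. *)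

From Stdlib Require Import Reals.
Open Scope R_scope.

Definition Cplx : Type := (R * R)%type.
Definition Re (z : Cplx) : R := fst z.
Definition Im (z : Cplx) : R := snd z.
Definition Cadd (z w : Cplx) : Cplx := (fst z + fst w, snd z + snd w).
Definition Csub (z w : Cplx) : Cplx := (fst z - fst w, snd z - snd w).
Definition Cmul (z w : Cplx) : Cplx :=
  (fst z * fst w - snd z * snd w, fst z * snd w + snd z * fst w).
Definition Cscal (t : R) (z : Cplx) : Cplx := (t * fst z, t * snd z).
Definition Cnorm (z : Cplx) : R := sqrt (fst z * fst z + snd z * snd z).
Definition Cexp (z : Cplx) : Cplx := (exp (fst z) * cos (snd z), exp (fst z) * sin (snd z)).

Definition E_ (kappa z : Cplx) : Cplx := Cadd (Cexp z) kappa.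

Fixpoint En (n : nat) (kappa : Cplx) : Cplx :=
  match n with
  | O => kappa
  | S m => E_ kappa (En m kappa)
  end.

Definition has_cderiv (f : Cplx -> Cplx) (z d : Cplx) : Prop :=
  forall eps, 0 < eps -> exists delta, 0 < delta /\
    forall h : Cplx, 0 < Cnorm h < delta ->
      Cnorm (Csub (Csub (f (Cadd z h)) (f z)) (Cmul d h)) <= eps * Cnorm h.

Definition cset := Cplx -> Prop.

Definition copen (U : cset) : Prop :=
  forall z, U z -> exists r, 0 < r /\ forall w, Cnorm (Csub w z) < r -> U w.

Definition cconnected (U : cset) : Prop :=
  forall A B : cset, copen A -> copen B ->
    (forall z, U z -> A z \/ B z) ->
    (forall z, U z -> A z -> B z -> False) ->
    (forall z, U z -> A z) \/ (forall z, U z -> B z).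

Definition domain (U : cset) : Prop :=
  (exists z, U z) /\ copen U /\ cconnected U.

Definition holomorphic_on (f : Cplx -> Cplx) (U : cset) : Prop :=
  forall z, U z -> exists d, has_cderiv f z d.

Definition conformal_iso (f : Cplx -> Cplx) (U W : cset) : Prop :=
  holomorphic_on f U /\
  (forall z, U z -> W (f z)) /\
  (forall z1 z2, U z1 -> U z2 -> f z1 = f z2 -> z1 = z2) /\
  (forall w, W w -> exists z, U z /\ f z = w).

Definition image (f : Cplx -> Cplx) (U : cset) : cset := fun w => exists z, U z /\ f z = w.

Definition convex (U : cset) : Prop :=
  forall z w t, U z -> U w -> 0 <= t <= 1 -> U (Cadd z (Cscal t (Csub w z))).

Definition in_horizontal_strip (U : cset) (h : R) : Prop :=
  exists a, forall z, U z -> a <= Im z <= a + h.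

(* Let g be the inverse of E^n : Lam -> V and
   F = E^{n,n+1}, F z = e^z + g z, so that E^{n+1} = F o E^n on Lam.  By the inverse
   function theorem F'(z) = e^z + 1/(E^n)'(g z), where |1/(E^n)'| < 1/2.  As V lies in a
   strip of height pi/2 in the right half-plane, the rotation by e^{-i (a + pi/4)} gives
   e^z, hence F'(z), positive real part; V being convex, F is injective (Noshiro-
   Warschawski).  Hence F is a bijection onto E^{n+1}(Lam), E^{n+1} is injective, and
   the derivative bounds come from |e^z| > e^xi and (E^{n+1})' = e^{E^n} (E^n)' + 1. *)

From Stdlib Require Import Reals Lra Lia Psatz ClassicalEpsilon.
Open Scope R_scope.

Ltac cunf := unfold Cadd, Csub, Cmul, Cscal, Re, Im in *.
Ltac ceq := cunf; apply injective_projections; simpl; ring.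

Definition Czero : Cplx := (0, 0).
Definition Cone : Cplx := (1, 0).
Definition Cconj (z : Cplx) : Cplx := (fst z, - snd z).
Definition Cinv (z : Cplx) : Cplx :=
  (fst z / (fst z * fst z + snd z * snd z), - snd z / (fst z * fst z + snd z * snd z)).

Lemma Cnorm_nonneg z : 0 <= Cnorm z.
Proof. apply sqrt_pos. Qed.

Lemma Cnorm_sq z : Cnorm z * Cnorm z = fst z * fst z + snd z * snd z.
Proof. unfold Cnorm; apply sqrt_sqrt; nra. Qed.

Lemma Cnorm_le_intro z t :
  0 <= t -> fst z * fst z + snd z * snd z <= t * t -> Cnorm z <= t.
Proof.
  intros Ht H. unfold Cnorm. rewrite <- (sqrt_square t Ht). apply sqrt_le_1_alt. exact H.
Qed.

Lemma Cnorm_fst z : Rabs (fst z) <= Cnorm z.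
Proof.
  pose proof (Cnorm_sq z); pose proof (Cnorm_nonneg z). apply Rabs_le; split; nra.
Qed.

Lemma Cnorm_snd z : Rabs (snd z) <= Cnorm z.
Proof.
  pose proof (Cnorm_sq z); pose proof (Cnorm_nonneg z). apply Rabs_le; split; nra.
Qed.

Lemma sq_abs x : x * x = Rabs x * Rabs x.
Proof. rewrite <- Rabs_mult. symmetry. apply Rabs_right. nra. Qed.

Lemma Cnorm_le_abs z : Cnorm z <= Rabs (fst z) + Rabs (snd z).
Proof.
  pose proof (Rabs_pos (fst z)); pose proof (Rabs_pos (snd z)).
  apply Cnorm_le_intro; [lra|]. rewrite (sq_abs (fst z)), (sq_abs (snd z)). nra.
Qed.

Lemma Cnorm_mul z w : Cnorm (Cmul z w) = Cnorm z * Cnorm w.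
Proof. unfold Cnorm, Cmul; simpl. rewrite <- sqrt_mult by nra. f_equal. ring. Qed.

Lemma Cnorm_scal t z : Cnorm (Cscal t z) = Rabs t * Cnorm z.
Proof.
  unfold Cnorm, Cscal; simpl. rewrite <- sqrt_Rsqr_abs, <- sqrt_mult by (unfold Rsqr; nra).
  f_equal. unfold Rsqr; ring.
Qed.

Lemma Cnorm_conj z : Cnorm (Cconj z) = Cnorm z.
Proof. unfold Cnorm, Cconj; simpl. f_equal. ring. Qed.

Lemma Cnorm_opp z : Cnorm (Cscal (-1) z) = Cnorm z.
Proof. rewrite Cnorm_scal, Rabs_left by lra. ring. Qed.

Lemma Cdot_le z w : fst z * fst w + snd z * snd w <= Cnorm z * Cnorm w.
Proof.
  unfold Cnorm. rewrite <- sqrt_mult by nra.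
  eapply Rle_trans; [apply Rle_abs|]. rewrite <- sqrt_Rsqr_abs.
  apply sqrt_le_1_alt. unfold Rsqr.
  pose proof (Rle_0_sqr (fst z * snd w - snd z * fst w)). unfold Rsqr in *. nra.
Qed.

Lemma Cnorm_triangle z w : Cnorm (Cadd z w) <= Cnorm z + Cnorm w.
Proof.
  pose proof (Cnorm_sq z); pose proof (Cnorm_sq w); pose proof (Cdot_le z w).
  pose proof (Cnorm_nonneg z); pose proof (Cnorm_nonneg w).
  apply Cnorm_le_intro; [lra|]. unfold Cadd; simpl. nra.
Qed.

Lemma Cnorm_sub_sym z w : Cnorm (Csub z w) = Cnorm (Csub w z).
Proof. unfold Cnorm, Csub; simpl. f_equal. ring. Qed.

Lemma Cnorm_sub_tri a b c : Cnorm (Csub a c) <= Cnorm (Csub a b) + Cnorm (Csub b c).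
Proof. replace (Csub a c) with (Cadd (Csub a b) (Csub b c)) by ceq. apply Cnorm_triangle. Qed.

Lemma Cnorm_rev a b : Cnorm a - Cnorm b <= Cnorm (Cadd a b).
Proof.
  pose proof (Cnorm_triangle (Cadd a b) (Cscal (-1) b)).
  replace (Cadd (Cadd a b) (Cscal (-1) b)) with a in H by ceq. rewrite Cnorm_opp in H. lra.
Qed.

Lemma Cnorm_C0 : Cnorm Czero = 0.
Proof. unfold Cnorm, Czero; simpl. replace (0 * 0 + 0 * 0) with 0 by ring. apply sqrt_0. Qed.

Lemma Cnorm_C1 : Cnorm Cone = 1.
Proof. unfold Cnorm, Cone; simpl. replace (1 * 1 + 0 * 0) with 1 by ring. apply sqrt_1. Qed.

Lemma Cnorm_eq0 z : Cnorm z = 0 -> z = Czero.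
Proof.
  intros H. pose proof (Cnorm_sq z). rewrite H in H0.
  destruct z as [x y]; simpl in *. unfold Czero. f_equal; nra.
Qed.

Lemma Cnorm_sub_eq0 z w : Cnorm (Csub z w) = 0 -> z = w.
Proof.
  intros H. apply Cnorm_eq0 in H. unfold Csub, Czero in H. injection H; intros.
  apply injective_projections; lra.
Qed.

Lemma Cinv_l z : 0 < Cnorm z -> Cmul (Cinv z) z = Cone.
Proof.
  intros H. assert (fst z * fst z + snd z * snd z <> 0) by (rewrite <- Cnorm_sq; nra).
  unfold Cmul, Cinv, Cone; simpl. f_equal; field; auto.
Qed.

Lemma Cnorm_Cinv z : 0 < Cnorm z -> Cnorm (Cinv z) = / Cnorm z.
Proof.
  intros H. assert (Cnorm (Cinv z) * Cnorm z = 1) by (rewrite <- Cnorm_mul, Cinv_l; auto; apply Cnorm_C1).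
  field_simplify_eq; lra.
Qed.

Lemma Cnorm_Cinv_lt_half z : 2 < Cnorm z -> Cnorm (Cinv z) < 1 / 2.
Proof.
  intros H. rewrite Cnorm_Cinv by lra.
  apply (Rmult_lt_reg_r (Cnorm z)); [lra|]. rewrite Rinv_l by lra. lra.
Qed.

Lemma Cexp_add z h : Cexp (Cadd z h) = Cmul (Cexp z) (Cexp h).
Proof.
  unfold Cexp, Cadd, Cmul; simpl. rewrite exp_plus, cos_plus, sin_plus. f_equal; ring.
Qed.

Lemma Cnorm_Cexp z : Cnorm (Cexp z) = exp (fst z).
Proof.
  unfold Cnorm, Cexp; simpl. pose proof (exp_pos (fst z)).
  replace (exp (fst z) * cos (snd z) * (exp (fst z) * cos (snd z)) +
           exp (fst z) * sin (snd z) * (exp (fst z) * sin (snd z)))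
    with (exp (fst z) * exp (fst z) * (Rsqr (sin (snd z)) + Rsqr (cos (snd z)))) by (unfold Rsqr; ring).
  rewrite sin2_cos2, Rmult_1_r. apply sqrt_square. lra.
Qed.

Lemma cderiv_bound f z d : has_cderiv f z d -> forall eps, 0 < eps -> exists delta, 0 < delta /\
  forall h, Cnorm h < delta ->
    Cnorm (Csub (Csub (f (Cadd z h)) (f z)) (Cmul d h)) <= eps * Cnorm h.
Proof.
  intros H eps Heps. destruct (H eps Heps) as [delta [Hd Hh]]. exists delta; split; auto.
  intros h Hlt. destruct (Rle_lt_or_eq_dec 0 (Cnorm h) (Cnorm_nonneg h)) as [Hp|Hz].
  - apply Hh; lra.
  - symmetry in Hz. apply Cnorm_eq0 in Hz. subst h.
    replace (Csub (Csub (f (Cadd z Czero)) (f z)) (Cmul d Czero)) with Czero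
      by (replace (Cadd z Czero) with z by (unfold Czero; ceq); unfold Czero; ceq).
    rewrite Cnorm_C0. lra.
Qed.

Lemma cderiv_ext f g z d : (forall w, f w = g w) -> has_cderiv f z d -> has_cderiv g z d.
Proof.
  intros E H eps Heps. destruct (H eps Heps) as [delta [Hd Hh]]. exists delta; split; auto.
  intros h Hh'. rewrite <- !E. auto.
Qed.

(* Derivatives are unique: test the two estimates on a small real increment. *)
Lemma cderiv_unique f z d1 d2 : has_cderiv f z d1 -> has_cderiv f z d2 -> d1 = d2.
Proof.
  intros H1 H2. apply Cnorm_sub_eq0.
  assert (Small : forall eps, 0 < eps -> Cnorm (Csub d1 d2) <= 2 * eps).
  { intros eps Heps. destruct (H1 eps Heps) as [a [Ha Hha]]. destruct (H2 eps Heps) as [b [Hb Hhb]].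
    set (t := Rmin a b / 2).
    pose proof (Rmin_pos a b Ha Hb); pose proof (Rmin_l a b); pose proof (Rmin_r a b).
    set (h := (t, 0) : Cplx).
    assert (Nh : Cnorm h = t).
    { unfold h, Cnorm; simpl. replace (t * t + 0 * 0) with (t * t) by ring.
      apply sqrt_square. unfold t; lra. }
    specialize (Hha h); specialize (Hhb h). rewrite Nh in Hha, Hhb.
    pose proof (Cnorm_triangle (Csub (Csub (f (Cadd z h)) (f z)) (Cmul d2 h))
                  (Cscal (-1) (Csub (Csub (f (Cadd z h)) (f z)) (Cmul d1 h)))) as T.
    replace (Cadd (Csub (Csub (f (Cadd z h)) (f z)) (Cmul d2 h))
                  (Cscal (-1) (Csub (Csub (f (Cadd z h)) (f z)) (Cmul d1 h))))
      with (Cmul (Csub d1 d2) h) in T by ceq.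
    rewrite Cnorm_mul, Nh, Cnorm_opp in T.
    apply Rmult_le_reg_r with t; unfold t in *; [lra|]. 
    specialize (Hha ltac:(lra)); specialize (Hhb ltac:(lra)). lra. }
  pose proof (Cnorm_nonneg (Csub d1 d2)).
  destruct (Rle_lt_or_eq_dec _ _ H) as [Hp|Hz]; [|lra].
  specialize (Small (Cnorm (Csub d1 d2) / 4) ltac:(lra)). lra.
Qed.

Lemma cderiv_id z : has_cderiv (fun w => w) z Cone.
Proof.
  intros eps Heps. exists 1; split; [lra|]. intros h _.
  replace (Csub (Csub (Cadd z h) z) (Cmul Cone h)) with Czero by (unfold Czero, Cone; ceq).
  rewrite Cnorm_C0. pose proof (Cnorm_nonneg h). nra.
Qed.

Lemma cderiv_add f g z a b : has_cderiv f z a -> has_cderiv g z b ->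
  has_cderiv (fun w => Cadd (f w) (g w)) z (Cadd a b).
Proof.
  intros Hf Hg eps Heps. destruct (Hf (eps / 2) ltac:(lra)) as [d1 [Hd1 H1]].
  destruct (Hg (eps / 2) ltac:(lra)) as [d2 [Hd2 H2]].
  exists (Rmin d1 d2); split; [apply Rmin_pos; auto|]. intros h Hh.
  pose proof (Rmin_l d1 d2); pose proof (Rmin_r d1 d2).
  specialize (H1 h ltac:(lra)); specialize (H2 h ltac:(lra)).
  replace (Csub (Csub (Cadd (f (Cadd z h)) (g (Cadd z h))) (Cadd (f z) (g z))) (Cmul (Cadd a b) h))
    with (Cadd (Csub (Csub (f (Cadd z h)) (f z)) (Cmul a h))
               (Csub (Csub (g (Cadd z h)) (g z)) (Cmul b h))) by ceq.
  eapply Rle_trans; [apply Cnorm_triangle|]. lra.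
Qed.

Lemma cderiv_lip f z d : has_cderiv f z d -> exists delta, 0 < delta /\
  forall h, Cnorm h < delta -> Cnorm (Csub (f (Cadd z h)) (f z)) <= (Cnorm d + 1) * Cnorm h.
Proof.
  intros H. destruct (cderiv_bound f z d H 1 ltac:(lra)) as [delta [Hd Hh]].
  exists delta; split; auto. intros h Hlt. specialize (Hh h Hlt).
  replace (Csub (f (Cadd z h)) (f z))
    with (Cadd (Csub (Csub (f (Cadd z h)) (f z)) (Cmul d h)) (Cmul d h)) by ceq.
  eapply Rle_trans; [apply Cnorm_triangle|]. rewrite Cnorm_mul. lra.
Qed.

Lemma cderiv_comp f g z a b : has_cderiv f z a -> has_cderiv g (f z) b ->
  has_cderiv (fun w => g (f w)) z (Cmul b a).
Proof.
  intros Hf Hg eps Heps.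
  destruct (cderiv_lip f z a Hf) as [d0 [Hd0 HL]].
  set (M := Cnorm a + 1). assert (HM : 0 < M) by (unfold M; pose proof (Cnorm_nonneg a); lra).
  set (Nb := Cnorm b + 1). assert (HNb : 0 < Nb) by (unfold Nb; pose proof (Cnorm_nonneg b); lra).
  destruct (cderiv_bound g (f z) b Hg (eps / (2 * M)) ltac:(apply Rdiv_lt_0_compat; lra))
    as [d2 [Hd2 H2]].
  destruct (cderiv_bound f z a Hf (eps / (2 * Nb)) ltac:(apply Rdiv_lt_0_compat; lra))
    as [d1 [Hd1 H1]].
  exists (Rmin (Rmin d0 d1) (d2 / M)); split.
  { apply Rmin_pos; [apply Rmin_pos|apply Rdiv_lt_0_compat]; auto. }
  intros h Hh. pose proof (Rmin_l (Rmin d0 d1) (d2 / M)); pose proof (Rmin_r (Rmin d0 d1) (d2 / M));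
  pose proof (Rmin_l d0 d1); pose proof (Rmin_r d0 d1); pose proof (Cnorm_nonneg h).
  set (k := Csub (f (Cadd z h)) (f z)).
  assert (Hk : Cnorm k <= M * Cnorm h) by (apply HL; lra).
  assert (Hk2 : Cnorm k < d2).
  { assert (Hm : M * Cnorm h < M * (d2 / M)) by (apply Rmult_lt_compat_l; lra).
    replace (M * (d2 / M)) with d2 in Hm by (field; lra). lra. }
  specialize (H2 k Hk2). specialize (H1 h ltac:(lra)).
  replace (Cadd (f z) k) with (f (Cadd z h)) in H2 by (unfold k; ceq).
  replace (Csub (Csub (g (f (Cadd z h))) (g (f z))) (Cmul (Cmul b a) h)) with
    (Cadd (Csub (Csub (g (f (Cadd z h))) (g (f z))) (Cmul b k))
          (Cmul b (Csub (Csub (f (Cadd z h)) (f z)) (Cmul a h)))) by (unfold k; ceq).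
  eapply Rle_trans; [apply Cnorm_triangle|]. rewrite Cnorm_mul.
  assert (eps / (2 * M) * Cnorm k <= eps / 2 * Cnorm h).
  { apply Rle_trans with (eps / (2 * M) * (M * Cnorm h)).
    - apply Rmult_le_compat_l; [left; apply Rdiv_lt_0_compat; lra|auto].
    - right; field; lra. }
  assert (Cnorm b * Cnorm (Csub (Csub (f (Cadd z h)) (f z)) (Cmul a h)) <= eps / 2 * Cnorm h).
  { apply Rle_trans with (Nb * (eps / (2 * Nb) * Cnorm h)).
    - apply Rmult_le_compat; auto using Cnorm_nonneg. unfold Nb; lra.
    - right; field; lra. }
  lra.
Qed.

Definition ccont (f : Cplx -> Cplx) (z : Cplx) : Prop :=
  forall eps, 0 < eps -> exists delta, 0 < delta /\
    forall w, Cnorm (Csub w z) < delta -> Cnorm (Csub (f w) (f z)) < eps.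

Lemma cderiv_cont f z d : has_cderiv f z d -> ccont f z.
Proof.
  intros H eps Heps. destruct (cderiv_lip f z d H) as [d0 [Hd0 HL]].
  set (M := Cnorm d + 1). assert (HM : 0 < M) by (unfold M; pose proof (Cnorm_nonneg d); lra).
  exists (Rmin d0 (eps / M)); split; [apply Rmin_pos; [auto|apply Rdiv_lt_0_compat; lra]|].
  intros w Hw. pose proof (Rmin_l d0 (eps / M)); pose proof (Rmin_r d0 (eps / M)).
  specialize (HL (Csub w z) ltac:(lra)). replace (Cadd z (Csub w z)) with w in HL by ceq.
  assert (Hm : M * Cnorm (Csub w z) < M * (eps / M)) by (apply Rmult_lt_compat_l; lra).
  replace (M * (eps / M)) with eps in Hm by (field; lra). fold M in HL. lra.
Qed.

Lemma ccont_const c z : ccont (fun _ => c) z.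
Proof.
  intros eps Heps. exists 1; split; [lra|]. intros w _.
  replace (Csub c c) with Czero by (unfold Czero; ceq). rewrite Cnorm_C0; lra.
Qed.

Lemma ccont_add f g z : ccont f z -> ccont g z -> ccont (fun w => Cadd (f w) (g w)) z.
Proof.
  intros Hf Hg eps Heps. destruct (Hf (eps / 2) ltac:(lra)) as [d1 [Hd1 H1]].
  destruct (Hg (eps / 2) ltac:(lra)) as [d2 [Hd2 H2]].
  exists (Rmin d1 d2); split; [apply Rmin_pos; auto|]. intros w Hw.
  pose proof (Rmin_l d1 d2); pose proof (Rmin_r d1 d2).
  specialize (H1 w ltac:(lra)); specialize (H2 w ltac:(lra)).
  replace (Csub (Cadd (f w) (g w)) (Cadd (f z) (g z)))
    with (Cadd (Csub (f w) (f z)) (Csub (g w) (g z))) by ceq.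
  eapply Rle_lt_trans; [apply Cnorm_triangle|]. lra.
Qed.

Lemma ccont_mul f g z : ccont f z -> ccont g z -> ccont (fun w => Cmul (f w) (g w)) z.
Proof.
  intros Hf Hg eps Heps.
  set (A := Cnorm (f z) + 1). set (B := Cnorm (g z) + 1).
  assert (0 < A) by (unfold A; pose proof (Cnorm_nonneg (f z)); lra).
  assert (0 < B) by (unfold B; pose proof (Cnorm_nonneg (g z)); lra).
  destruct (Hf (Rmin 1 (eps / (2 * B)))) as [d1 [Hd1 H1]].
  { apply Rmin_pos; [lra|apply Rdiv_lt_0_compat; lra]. }
  destruct (Hg (eps / (2 * A)) ltac:(apply Rdiv_lt_0_compat; lra)) as [d2 [Hd2 H2]].
  exists (Rmin d1 d2); split; [apply Rmin_pos; auto|]. intros w Hw.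
  pose proof (Rmin_l d1 d2); pose proof (Rmin_r d1 d2).
  specialize (H1 w ltac:(lra)); specialize (H2 w ltac:(lra)).
  pose proof (Rmin_l 1 (eps / (2 * B))); pose proof (Rmin_r 1 (eps / (2 * B))).
  replace (Csub (Cmul (f w) (g w)) (Cmul (f z) (g z))) with
    (Cadd (Cmul (f w) (Csub (g w) (g z))) (Cmul (Csub (f w) (f z)) (g z))) by ceq.
  eapply Rle_lt_trans; [apply Cnorm_triangle|]. rewrite !Cnorm_mul.
  assert (HA : Cnorm (f w) <= A).
  { pose proof (Cnorm_triangle (f z) (Csub (f w) (f z))) as T.
    replace (Cadd (f z) (Csub (f w) (f z))) with (f w) in T by ceq. unfold A; lra. }
  assert (HB : Cnorm (Csub (f w) (f z)) * Cnorm (g z) <= eps / (2 * B) * B).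
  { apply Rmult_le_compat; auto using Cnorm_nonneg; first [lra | unfold B; lra]. }
  replace (eps / (2 * B) * B) with (eps / 2) in HB by (field; lra).
  assert (HC : Cnorm (f w) * Cnorm (Csub (g w) (g z)) < A * (eps / (2 * A))).
  { apply Rle_lt_trans with (A * Cnorm (Csub (g w) (g z))).
    - apply Rmult_le_compat_r; auto using Cnorm_nonneg.
    - apply Rmult_lt_compat_l; lra. }
  replace (A * (eps / (2 * A))) with (eps / 2) in HC by (field; lra). lra.
Qed.

Lemma mvt_bound (f f' : R -> R) x K : (forall c, derivable_pt_lim f c (f' c)) ->
  (forall c, Rabs c <= Rabs x -> Rabs (f' c) <= K) -> Rabs (f x - f 0) <= K * Rabs x.
Proof.
  intros Hd Hb. destruct (MVT_abs f f' 0 x (fun c _ => Hd c)) as [c [E Hc]].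
  rewrite E, Rminus_0_r. apply Rmult_le_compat_r; [apply Rabs_pos|]. apply Hb.
  unfold Rmin, Rmax in Hc. destruct (Rle_dec 0 x);
    [rewrite (Rabs_right x) by lra | rewrite (Rabs_left x) by lra]; apply Rabs_le; lra.
Qed.

Lemma sin_abs_le x : Rabs (sin x) <= Rabs x.
Proof.
  pose proof (mvt_bound sin cos x 1 derivable_pt_lim_sin) as H.
  rewrite sin_0, Rminus_0_r, Rmult_1_l in H. apply H.
  intros c _. pose proof (COS_bound c). apply Rabs_le; lra.
Qed.

Lemma cos1_le x : Rabs (cos x - 1) <= x * x.
Proof.
  pose proof (mvt_bound cos (fun c => - sin c) x (Rabs x) (derivable_pt_lim_cos)) as H.
  rewrite cos_0 in H. rewrite sq_abs. apply H.
  intros c Hc. rewrite Rabs_Ropp. eapply Rle_trans; [apply sin_abs_le|exact Hc].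
Qed.

Lemma sin_id_le x : Rabs x <= 1 -> Rabs (sin x - x) <= x * x.
Proof.
  intros Hx.
  assert (D : forall c, derivable_pt_lim (fun t => sin t - t) c (cos c - 1)).
  { intros c. apply derivable_pt_lim_minus; [apply derivable_pt_lim_sin|apply derivable_pt_lim_id]. }
  pose proof (mvt_bound _ _ x (Rabs x) D) as H. simpl in H.
  rewrite sin_0, !Rminus_0_r in H. rewrite sq_abs. apply H.
  intros c Hc. eapply Rle_trans; [apply cos1_le|].
  rewrite sq_abs. pose proof (Rabs_pos c). nra.
Qed.

Lemma exp_le_mono x y : x <= y -> exp x <= exp y.
Proof.
  intros H. destruct (Rle_lt_or_eq_dec x y H) as [Hl|He];
    [left; apply exp_increasing; exact Hl | right; subst; reflexivity].
Qed.

Lemma exp1_le x : Rabs x <= 1 -> Rabs (exp x - 1) <= 3 * Rabs x.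
Proof.
  intros Hx. pose proof (mvt_bound exp exp x 3 derivable_pt_lim_exp) as H.
  rewrite exp_0 in H. apply H. intros c Hc. rewrite Rabs_right by (left; apply exp_pos).
  apply Rle_trans with (exp 1); [apply exp_le_mono|apply exp_le_3].
  pose proof (Rle_abs c). lra.
Qed.

Lemma exp2_le x : Rabs x <= 1 -> Rabs (exp x - 1 - x) <= 3 * (x * x).
Proof.
  intros Hx.
  assert (D : forall c, derivable_pt_lim (fun t => exp t - t) c (exp c - 1)).
  { intros c. apply derivable_pt_lim_minus; [apply derivable_pt_lim_exp|apply derivable_pt_lim_id]. }
  pose proof (mvt_bound _ _ x (3 * Rabs x) D) as H. simpl in H.
  rewrite exp_0 in H. replace (exp x - x - (1 - 0)) with (exp x - 1 - x) in H by ring.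
  rewrite sq_abs, <- Rmult_assoc. apply H.
  intros c Hc. eapply Rle_trans; [apply exp1_le; lra|]. lra.
Qed.

Lemma exp_cos_quad a b : Rabs a <= 1 -> Rabs (exp a * cos b - 1 - a) <= 3 * (a * a) + 2 * (b * b).
Proof.
  intros Ha.
  replace (exp a * cos b - 1 - a) with ((exp a - 1 - a) * cos b + (1 + a) * (cos b - 1)) by ring.
  eapply Rle_trans; [apply Rabs_triang|]. rewrite !Rabs_mult.
  pose proof (exp2_le a Ha); pose proof (cos1_le b); pose proof (COS_bound b).
  assert (Rabs (cos b) <= 1) by (apply Rabs_le; lra).
  assert (Rabs (1 + a) <= 2) by (apply Rabs_le; pose proof (Rle_abs a); pose proof (Rle_abs (- a));
                                 rewrite Rabs_Ropp in *; lra).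
  pose proof (Rabs_pos (exp a - 1 - a)); pose proof (Rabs_pos (cos b)); pose proof (Rabs_pos (1 + a)).
  apply Rplus_le_compat.
  - apply Rle_trans with (Rabs (exp a - 1 - a) * 1); [apply Rmult_le_compat_l|]; lra.
  - pose proof (Rabs_pos (cos b - 1)). apply Rmult_le_compat; lra.
Qed.

Lemma exp_sin_quad a b : Rabs a <= 1 -> Rabs b <= 1 ->
  Rabs (exp a * sin b - b) <= 3 * Rabs a * Rabs b + b * b.
Proof.
  intros Ha Hb.
  replace (exp a * sin b - b) with ((exp a - 1) * sin b + (sin b - b)) by ring.
  eapply Rle_trans; [apply Rabs_triang|]. rewrite Rabs_mult.
  pose proof (exp1_le a Ha); pose proof (sin_abs_le b); pose proof (sin_id_le b Hb).
  pose proof (Rabs_pos (exp a - 1)); pose proof (Rabs_pos (sin b)).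
  apply Rplus_le_compat; [apply Rmult_le_compat; lra|assumption].
Qed.

Lemma Cexp_quad h : Cnorm h <= 1 ->
  Cnorm (Csub (Csub (Cexp h) Cone) h) <= 10 * (Cnorm h * Cnorm h).
Proof.
  intros Hh. destruct h as [a b].
  pose proof (Cnorm_fst (a, b)) as Ha; pose proof (Cnorm_snd (a, b)) as Hb; simpl in Ha, Hb.
  set (N := Cnorm (a, b)) in *.
  pose proof (exp_cos_quad a b ltac:(lra)) as R1.
  pose proof (exp_sin_quad a b ltac:(lra) ltac:(lra)) as R2.
  eapply Rle_trans; [apply Cnorm_le_abs|]. unfold Cexp, Csub, Cone; simpl.
  replace (exp a * sin b - 0 - b) with (exp a * sin b - b) by ring.
  rewrite (sq_abs a), (sq_abs b) in *. pose proof (Rabs_pos a); pose proof (Rabs_pos b). nra.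
Qed.

Lemma cderiv_exp z : has_cderiv Cexp z (Cexp z).
Proof.
  intros eps Heps. set (M := 10 * exp (fst z) + 1).
  assert (HM : 0 < M) by (unfold M; pose proof (exp_pos (fst z)); lra).
  exists (Rmin 1 (eps / M)); split; [apply Rmin_pos; [lra|apply Rdiv_lt_0_compat; lra]|].
  intros h [Hh0 Hh]. pose proof (Rmin_l 1 (eps / M)); pose proof (Rmin_r 1 (eps / M)).
  replace (Csub (Csub (Cexp (Cadd z h)) (Cexp z)) (Cmul (Cexp z) h)) with
    (Cmul (Cexp z) (Csub (Csub (Cexp h) Cone) h)) by (rewrite Cexp_add; unfold Cone; ceq).
  rewrite Cnorm_mul, Cnorm_Cexp. pose proof (Cexp_quad h ltac:(lra)).
  pose proof (exp_pos (fst z)).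
  apply Rle_trans with (exp (fst z) * (10 * (Cnorm h * Cnorm h))).
  { apply Rmult_le_compat_l; lra. }
  assert (Cnorm h * M <= eps).
  { apply Rle_trans with (eps / M * M); [apply Rmult_le_compat_r; lra|right; field; lra]. }
  unfold M in *. nra.
Qed.

(* (E^n)'(k), computed by the chain rule: (E^{m+1})' = e^{E^m} (E^m)' + 1. *)
Fixpoint Dn (m : nat) (k : Cplx) : Cplx :=
  match m with
  | O => Cone
  | S p => Cadd (Cmul (Cexp (En p k)) (Dn p k)) Cone
  end.

Lemma En_deriv m k : has_cderiv (En m) k (Dn m k).
Proof.
  induction m as [|m IH]; simpl.
  - apply (cderiv_ext (fun w => w)); [reflexivity|apply cderiv_id].
  - apply (cderiv_ext (fun w => Cadd (Cexp (En m w)) w)); [reflexivity|].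
    apply cderiv_add; [|apply cderiv_id].
    apply (cderiv_comp (En m) Cexp); [exact IH|apply cderiv_exp].
Qed.

Lemma Dn_cont m k : ccont (Dn m) k.
Proof.
  induction m as [|m IH]; simpl; [apply ccont_const|].
  apply (ccont_add (fun w => Cmul (Cexp (En m w)) (Dn m w)) (fun _ => Cone)); [|apply ccont_const].
  apply (ccont_mul (fun w => Cexp (En m w))); [|exact IH].
  apply (cderiv_cont _ _ (Cmul (Cexp (En m k)) (Dn m k))).
  apply (cderiv_comp (En m) Cexp); [apply En_deriv|apply cderiv_exp].
Qed.

Lemma line_deriv f y h c t d :
  has_cderiv f (Cadd y (Cscal t h)) d ->
  derivable_pt_lim (fun s => Re (Cmul c (f (Cadd y (Cscal s h))))) t (Re (Cmul c (Cmul d h))).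
Proof.
  intros H eps Heps.
  set (p := Cadd y (Cscal t h)).
  set (M := Cnorm c * Cnorm h + 1).
  pose proof (Cnorm_nonneg c); pose proof (Cnorm_nonneg h).
  assert (HM : 0 < M) by (unfold M; nra).
  destruct (cderiv_bound f p d H (eps / (2 * M)) ltac:(apply Rdiv_lt_0_compat; lra)) as [del [Hdel Hb]].
  assert (Hdel' : 0 < del / (Cnorm h + 1)) by (apply Rdiv_lt_0_compat; lra).
  exists (mkposreal _ Hdel'). intros s Hs0 Hs. simpl in Hs.
  set (k := Cscal s h).
  assert (Nk : Cnorm k = Rabs s * Cnorm h) by apply Cnorm_scal.
  assert (Hk : Cnorm k < del).
  { rewrite Nk. pose proof (Rabs_pos s).
    apply Rle_lt_trans with (Rabs s * (Cnorm h + 1)); [nra|].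
    replace del with (del / (Cnorm h + 1) * (Cnorm h + 1)) by (field; lra).
    apply Rmult_lt_compat_r; lra. }
  specialize (Hb k Hk).
  set (u := Csub (Csub (f (Cadd p k)) (f p)) (Cmul d k)) in *.
  replace (Cadd y (Cscal (t + s) h)) with (Cadd p k) by (unfold p, k; ceq). fold p.
  replace ((Re (Cmul c (f (Cadd p k))) - Re (Cmul c (f p))) / s - Re (Cmul c (Cmul d h)))
    with (Re (Cmul c u) / s) by (unfold u, k; cunf; simpl; field; auto).
  unfold Rdiv. rewrite Rabs_mult, Rabs_inv.
  assert (Rabs s > 0) by (apply Rabs_pos_lt; auto).
  assert (Rabs (Re (Cmul c u)) <= Cnorm c * (eps / (2 * M) * (Rabs s * Cnorm h))).
  { eapply Rle_trans; [apply Cnorm_fst|]. rewrite Cnorm_mul, <- Nk.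
    apply Rmult_le_compat_l; auto. }
  apply Rle_lt_trans with (Cnorm c * (eps / (2 * M) * (Rabs s * Cnorm h)) * / Rabs s).
  { apply Rmult_le_compat_r; [left; apply Rinv_0_lt_compat; lra|auto]. }
  replace (Cnorm c * (eps / (2 * M) * (Rabs s * Cnorm h)) * / Rabs s)
    with (Cnorm c * Cnorm h / M * (eps / 2)) by (field; lra).
  assert (Cnorm c * Cnorm h / M < 1).
  { apply (Rmult_lt_reg_r M); auto. unfold Rdiv; rewrite Rmult_assoc, Rinv_l by lra. unfold M; lra. }
  assert (0 <= Cnorm c * Cnorm h / M) by (apply Rmult_le_pos; [nra|left; apply Rinv_0_lt_compat; auto]).
  nra.
Qed.

Lemma seg_mvt f D y h c :
  (forall t, 0 <= t <= 1 -> has_cderiv f (Cadd y (Cscal t h)) (D t)) ->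
  exists t, 0 < t < 1 /\
    Re (Cmul c (Csub (f (Cadd y h)) (f y))) = Re (Cmul c (Cmul (D t) h)).
Proof.
  intros H.
  destruct (MVT_cor2 (fun s => Re (Cmul c (f (Cadd y (Cscal s h)))))
      (fun s => Re (Cmul c (Cmul (D s) h))) 0 1 ltac:(lra)) as [t [E Ht]].
  { intros s Hs. apply line_deriv, H, Hs. }
  exists t; split; auto.
  replace (Cadd y (Cscal 1 h)) with (Cadd y h) in E by ceq.
  replace (Cadd y (Cscal 0 h)) with y in E by ceq.
  rewrite Rminus_0_r, Rmult_1_r in E. rewrite <- E. cunf; simpl; ring.
Qed.

Lemma ball_convex a r x y t : Cnorm (Csub x a) < r -> Cnorm (Csub y a) < r -> 0 <= t <= 1 ->
  Cnorm (Csub (Cadd y (Cscal t (Csub x y))) a) < r.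
Proof.
  intros Hx Hy Ht.
  replace (Csub (Cadd y (Cscal t (Csub x y))) a)
    with (Cadd (Cscal (1 - t) (Csub y a)) (Cscal t (Csub x a))) by ceq.
  eapply Rle_lt_trans; [apply Cnorm_triangle|]. rewrite !Cnorm_scal, !Rabs_right by lra.
  destruct (Rle_lt_or_eq_dec 0 t (proj1 Ht)).
  - pose proof (Cnorm_nonneg (Csub y a)). nra.
  - subst t. nra.
Qed.

(* The estimate is tested
   against the direction v of the error, via the real part of conj(v) * _. *)
Lemma mvi f D a A r m x y :
  (forall p, has_cderiv f p (D p)) ->
  (forall p, Cnorm (Csub p a) < r -> Cnorm (Csub (D p) A) <= m) ->
  Cnorm (Csub x a) < r -> Cnorm (Csub y a) < r ->
  Cnorm (Csub (Csub (f x) (f y)) (Cmul A (Csub x y))) <= m * Cnorm (Csub x y).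
Proof.
  intros Hd HD Hx Hy.
  set (v := Csub (Csub (f x) (f y)) (Cmul A (Csub x y))).
  destruct (seg_mvt f (fun t => D (Cadd y (Cscal t (Csub x y)))) y (Csub x y) (Cconj v))
    as [t [Ht E]].
  { intros t _. apply Hd. }
  replace (Cadd y (Csub x y)) with x in E by ceq.
  set (p := Cadd y (Cscal t (Csub x y))) in *.
  assert (Hp : Cnorm (Csub p a) < r) by (apply ball_convex; auto; lra).
  assert (E2 : Cnorm v * Cnorm v = Re (Cmul (Cconj v) (Cmul (Csub (D p) A) (Csub x y)))).
  { rewrite Cnorm_sq. unfold v, Cconj in *; cunf; simpl in *. nra. }
  assert (Cnorm v * Cnorm v <= Cnorm v * (m * Cnorm (Csub x y))).
  { rewrite E2. eapply Rle_trans; [apply Rle_abs|]. eapply Rle_trans; [apply Cnorm_fst|].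
    rewrite !Cnorm_mul, Cnorm_conj. apply Rmult_le_compat_l; [apply Cnorm_nonneg|].
    apply Rmult_le_compat_r; [apply Cnorm_nonneg|auto]. }
  pose proof (Cnorm_nonneg (Csub x y)); pose proof (Cnorm_nonneg (Csub (D p) A)).
  specialize (HD p Hp).
  destruct (Rle_lt_or_eq_dec 0 (Cnorm v) (Cnorm_nonneg v)) as [Hv|Hv]; [|rewrite <- Hv]; nra.
Qed.

Lemma pow_half_small C eps : 0 < eps -> exists N, forall n, (n >= N)%nat -> C * (/ 2) ^ n < eps.
Proof.
  intros Heps. pose proof (Rabs_pos C); pose proof (Rle_abs C).
  destruct (pow_lt_1_zero (/ 2) ltac:(rewrite Rabs_right; lra) (eps / (Rabs C + 1)))
    as [N HN]; [apply Rdiv_lt_0_compat; lra|].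
  exists N. intros n Hn. specialize (HN n Hn).
  assert (0 < (/ 2) ^ n) by (apply pow_lt; lra).
  rewrite Rabs_right in HN by lra.
  apply Rle_lt_trans with ((Rabs C + 1) * (/ 2) ^ n); [nra|].
  apply (Rmult_lt_reg_r (/ (Rabs C + 1))); [apply Rinv_0_lt_compat; lra|].
  replace ((Rabs C + 1) * (/ 2) ^ n * / (Rabs C + 1)) with ((/ 2) ^ n) by (field; lra).
  exact HN.
Qed.

Lemma small_pow X C : (forall k, X <= C * (/ 2) ^ k) -> X <= 0.
Proof.
  intros H. apply Rle_plus_epsilon. intros eps Heps.
  destruct (pow_half_small C eps Heps) as [N HN]. specialize (HN N (le_n N)).
  specialize (H N). lra.
Qed.

Lemma geometric_limit (u : nat -> Cplx) C :
  (forall k m, Cnorm (Csub (u (k + m)%nat) (u k)) <= C * (/ 2) ^ k) ->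
  exists x, forall k, Cnorm (Csub x (u k)) <= C * (/ 2) ^ k.
Proof.
  intros Hu.
  assert (Far : forall k n, (n >= k)%nat -> Cnorm (Csub (u n) (u k)) <= C * (/ 2) ^ k).
  { intros k n Hn. replace n with (k + (n - k))%nat by lia. apply Hu. }
  assert (Cauchy : forall pr : Cplx -> R, (forall z, Rabs (pr z) <= Cnorm z) ->
            (forall z w, pr (Csub z w) = pr z - pr w) -> Cauchy_crit (fun n => pr (u n))).
  { intros pr Hpr Hlin eps Heps.
    destruct (pow_half_small (2 * C) eps Heps) as [N HN]. exists N. intros n m Hn Hm.
    unfold Rdist. rewrite <- Hlin. eapply Rle_lt_trans; [apply Hpr|].
    eapply Rle_lt_trans; [apply (Cnorm_sub_tri _ (u N))|]. rewrite (Cnorm_sub_sym (u N)).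
    pose proof (Far N n Hn); pose proof (Far N m Hm); specialize (HN N (le_n N)). lra. }
  destruct (R_complete _ (Cauchy fst Cnorm_fst (fun _ _ => eq_refl))) as [lu Hlu].
  destruct (R_complete _ (Cauchy snd Cnorm_snd (fun _ _ => eq_refl))) as [lv Hlv].
  exists (lu, lv). intros k. apply Rle_plus_epsilon. intros eps Heps.
  destruct (Hlu (eps / 2) ltac:(lra)) as [N1 H1]. destruct (Hlv (eps / 2) ltac:(lra)) as [N2 H2].
  set (n := max k (max N1 N2)).
  specialize (H1 n ltac:(unfold n; lia)); specialize (H2 n ltac:(unfold n; lia)).
  unfold Rdist in H1, H2. rewrite Rabs_minus_sym in H1, H2.
  assert (Cnorm (Csub (lu, lv) (u n)) <= eps).
  { eapply Rle_trans; [apply Cnorm_le_abs|]. unfold Csub; simpl. lra. }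
  pose proof (Far k n ltac:(unfold n; lia)).
  eapply Rle_trans; [apply (Cnorm_sub_tri _ (u n))|]. lra.
Qed.

Section Contraction.
Variables (T : Cplx -> Cplx) (a : Cplx) (r s : R).
Hypothesis T_contraction : forall x y, Cnorm (Csub x a) < r -> Cnorm (Csub y a) < r ->
  Cnorm (Csub (T x) (T y)) <= / 2 * Cnorm (Csub x y).
Hypothesis T_first_step : Cnorm (Csub (T a) a) <= s.
Hypothesis s_small : 2 * s < r.

Let orbit (k : nat) : Cplx := Nat.iter k T a.

Lemma orbit_steps k : Cnorm (Csub (orbit k) a) <= 2 * s * (1 - (/ 2) ^ k) /\
                      Cnorm (Csub (orbit (S k)) (orbit k)) <= s * (/ 2) ^ k.
Proof.
  induction k as [|k [IH1 IH2]].
  - unfold orbit; simpl. replace (Csub a a) with Czero by (unfold Czero; ceq).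
    rewrite Cnorm_C0, Rmult_1_r. split; lra.
  - assert (0 < (/ 2) ^ k) by (apply pow_lt; lra). pose proof (Cnorm_nonneg (Csub (T a) a)).
    assert (Next : Cnorm (Csub (orbit (S k)) a) <= 2 * s * (1 - (/ 2) ^ S k)).
    { eapply Rle_trans; [apply (Cnorm_sub_tri _ (orbit k))|]. simpl pow. nra. }
    split; [exact Next|].
    change (Cnorm (Csub (T (orbit (S k))) (T (orbit k))) <= s * (/ 2) ^ S k).
    eapply Rle_trans; [apply T_contraction; simpl pow in *; nra|]. simpl pow. nra.
Qed.

Lemma orbit_cauchy k m : Cnorm (Csub (orbit (k + m)) (orbit k)) <= 2 * s * (/ 2) ^ k.
Proof.
  assert (Strong : Cnorm (Csub (orbit (k + m)) (orbit k)) <= 2 * s * (/ 2) ^ k * (1 - (/ 2) ^ m)).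
  { induction m as [|m IH].
    - rewrite Nat.add_0_r. replace (Csub (orbit k) (orbit k)) with Czero by (unfold Czero; ceq).
      rewrite Cnorm_C0. simpl. lra.
    - rewrite Nat.add_succ_r. eapply Rle_trans; [apply (Cnorm_sub_tri _ (orbit (k + m)))|].
      destruct (orbit_steps (k + m)) as [_ Step]. rewrite pow_add in Step. simpl pow. nra. }
  assert (0 < (/ 2) ^ k) by (apply pow_lt; lra). assert (0 < (/ 2) ^ m) by (apply pow_lt; lra).
  pose proof (Cnorm_nonneg (Csub (T a) a)).
  assert (0 <= s * (/ 2) ^ k) by (apply Rmult_le_pos; lra). nra.
Qed.

Lemma contraction_fixpoint : exists x, Cnorm (Csub x a) <= 2 * s /\ T x = x.
Proof.
  destruct (geometric_limit orbit (2 * s) orbit_cauchy) as [x Hx].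
  assert (Hxa : Cnorm (Csub x a) <= 2 * s) by (specialize (Hx 0%nat); simpl in Hx; lra).
  exists x; split; [exact Hxa|]. symmetry. apply Cnorm_sub_eq0.
  apply Rle_antisym; [|apply Cnorm_nonneg]. apply (small_pow _ (2 * s)). intros k.
  destruct (orbit_steps k) as [Hk _]. assert (0 < (/ 2) ^ k) by (apply pow_lt; lra).
  assert (0 <= s) by (pose proof (Cnorm_nonneg (Csub (T a) a)); lra).
  assert (Hin : Cnorm (Csub (orbit k) a) < r) by nra.
  assert (Near : Cnorm (Csub (T x) (orbit (S k))) <= / 2 * Cnorm (Csub x (orbit k)))
    by (apply T_contraction; lra).
  eapply Rle_trans; [apply (Cnorm_sub_tri _ (orbit (S k)))|].
  rewrite (Cnorm_sub_sym (orbit (S k)) (T x)). pose proof (Hx k); pose proof (Hx (S k)).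
  simpl pow in *. lra.
Qed.

End Contraction.

(* Local surjectivity: if f is |A|/2-close to its linearization u |-> A u on the ball
   of radius r about a, every w near f a has a preimage near a, namely the fixed
   point of the Newton map x |-> x - A^{-1} (f x - w). *)
Lemma local_surj f a A r w :
  0 < Cnorm A ->
  (forall x y, Cnorm (Csub x a) < r -> Cnorm (Csub y a) < r ->
     Cnorm (Csub (Csub (f x) (f y)) (Cmul A (Csub x y))) <= Cnorm A / 2 * Cnorm (Csub x y)) ->
  2 * (Cnorm (Csub w (f a)) / Cnorm A) < r ->
  exists x, Cnorm (Csub x a) <= 2 * (Cnorm (Csub w (f a)) / Cnorm A) /\ f x = w.
Proof.
  intros HA HL Hw.
  set (Ai := Cinv A).
  assert (NAi : Cnorm Ai = / Cnorm A) by (apply Cnorm_Cinv; auto).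
  assert (Cancel : forall u, Cmul Ai (Cmul A u) = u /\ Cmul A (Cmul Ai u) = u).
  { intros u. assert (E : Cmul Cone u = u) by (unfold Cone; ceq).
    rewrite <- (Cinv_l A HA) in E. split; rewrite <- E at 2; ceq. }
  set (T := fun x => Csub x (Cmul Ai (Csub (f x) w))).
  destruct (contraction_fixpoint T a r (Cnorm (Csub w (f a)) / Cnorm A)) as [x [Hx Fix]].
  - intros x y Hx Hy.
    assert (E : Csub (T x) (T y) =
                Cscal (-1) (Cmul Ai (Csub (Csub (f x) (f y)) (Cmul A (Csub x y))))).
    { destruct (Cancel (Csub x y)) as [C _].
      transitivity (Csub (Cmul Ai (Cmul A (Csub x y))) (Cmul Ai (Csub (f x) (f y)))); [|ceq].
      rewrite C. unfold T; ceq. }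
    rewrite E.
    rewrite Cnorm_opp, Cnorm_mul, NAi.
    apply Rle_trans with (/ Cnorm A * (Cnorm A / 2 * Cnorm (Csub x y))).
    + apply Rmult_le_compat_l; [left; apply Rinv_0_lt_compat|apply HL]; auto.
    + right; field; lra.
  - replace (Csub (T a) a) with (Cscal (-1) (Cmul Ai (Csub (f a) w))) by (unfold T; ceq).
    rewrite Cnorm_opp, Cnorm_mul, NAi, Cnorm_sub_sym. right; unfold Rdiv; ring.
  - exact Hw.
  - exists x; split; [exact Hx|]. apply Cnorm_sub_eq0.
    assert (Z : Cmul Ai (Csub (f x) w) = Czero).
    { transitivity (Csub x (T x)); [unfold T; ceq|]. rewrite Fix. unfold Czero; ceq. }
    destruct (Cancel (Csub (f x) w)) as [_ C]. rewrite <- C, Z, Cnorm_mul, Cnorm_C0. ring.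
Qed.

(* Inverse function theorem, quantitative part: near z, the inverse g of an injective
   map f whose derivative D is continuous and nonzero at g z is Lipschitz with
   constant 2 / |D (g z)|: the local preimage given by local_surj must be g w. *)
Lemma inverse_local_lipschitz f D L W g z :
  copen L -> copen W ->
  (forall x, has_cderiv f x (D x)) -> ccont D (g z) ->
  (forall x y, L x -> L y -> f x = f y -> x = y) ->
  (forall w, W w -> L (g w) /\ f (g w) = w) ->
  W z -> 0 < Cnorm (D (g z)) ->
  exists rho, 0 < rho /\ forall w, Cnorm (Csub w z) < rho ->
    W w /\ Cnorm (Csub (g w) (g z)) <= 2 / Cnorm (D (g z)) * Cnorm (Csub w z).
Proof.
  intros HLo HWo Hd Hc Hinj Hg Hz HA.
  destruct (Hg z Hz) as [La fa].
  set (a := g z) in *. set (A := D a) in *.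
  destruct (HWo z Hz) as [r0 [Hr0 HW0]].
  destruct (HLo a La) as [r1 [Hr1 HL1]].
  destruct (Hc (Cnorm A / 2) ltac:(lra)) as [r2 [Hr2 HD2]].
  set (r := Rmin r1 r2).
  assert (Hr1' : r <= r1) by apply Rmin_l. assert (Hr2' : r <= r2) by apply Rmin_r.
  assert (Hr : 0 < r) by (apply Rmin_pos; auto).
  assert (Lin : forall x y, Cnorm (Csub x a) < r -> Cnorm (Csub y a) < r ->
     Cnorm (Csub (Csub (f x) (f y)) (Cmul A (Csub x y))) <= Cnorm A / 2 * Cnorm (Csub x y)).
  { intros x y Hx Hy. apply (mvi f D a A r); auto.
    intros p Hp. left. apply HD2. lra. }
  assert (Hrho : 0 < r * Cnorm A / 2) by (apply Rmult_lt_0_compat; [apply Rmult_lt_0_compat|]; lra).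
  exists (Rmin r0 (r * Cnorm A / 2)); split; [apply Rmin_pos; auto|].
  intros w Hw. pose proof (Rmin_l r0 (r * Cnorm A / 2)); pose proof (Rmin_r r0 (r * Cnorm A / 2)).
  assert (Ww : W w) by (apply HW0; lra).
  split; [exact Ww|].
  assert (Small : 2 * (Cnorm (Csub w (f a)) / Cnorm A) < r).
  { rewrite fa. apply (Rmult_lt_reg_r (Cnorm A)); [lra|].
    replace (2 * (Cnorm (Csub w z) / Cnorm A) * Cnorm A) with (2 * Cnorm (Csub w z)) by (field; lra).
    lra. }
  destruct (local_surj f a A r w HA Lin Small) as [x [Hx Hfx]].
  destruct (Hg w Ww) as [Lgw fgw].
  assert (x = g w) by (apply Hinj; [apply HL1; lra | exact Lgw | congruence]).
  subst x. rewrite fa in Hx.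
  replace (2 / Cnorm A * Cnorm (Csub w z)) with (2 * (Cnorm (Csub w z) / Cnorm A)) by (field; lra).
  exact Hx.
Qed.

Lemma cderiv_inverse f g z A rho K :
  0 < rho -> 0 <= K -> 0 < Cnorm A -> has_cderiv f (g z) A ->
  (forall w, Cnorm (Csub w z) < rho ->
     f (g w) = w /\ Cnorm (Csub (g w) (g z)) <= K * Cnorm (Csub w z)) ->
  has_cderiv g z (Cinv A).
Proof.
  intros Hrho HK HA Hf Hloc eps Heps.
  set (a := g z).
  assert (fa : f a = z).
  { apply Hloc. replace (Csub z z) with Czero by (unfold Czero; ceq). rewrite Cnorm_C0. lra. }
  set (eps' := eps * Cnorm A / (K + 1)).
  assert (Heps' : 0 < eps') by (apply Rdiv_lt_0_compat; [apply Rmult_lt_0_compat|]; lra).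
  destruct (cderiv_bound f a A Hf eps' Heps') as [d1 [Hd1 H1]].
  assert (0 < d1 / (K + 1)) by (apply Rdiv_lt_0_compat; lra).
  exists (Rmin rho (d1 / (K + 1))); split; [apply Rmin_pos; auto|].
  intros h [_ Hh].
  assert (Hh1 : Cnorm h < rho) by (pose proof (Rmin_l rho (d1 / (K + 1))); lra).
  assert (Hh2 : Cnorm h < d1 / (K + 1)) by (pose proof (Rmin_r rho (d1 / (K + 1))); lra).
  set (w := Cadd z h).
  assert (Nw : Csub w z = h) by (unfold w; ceq).
  destruct (Hloc w ltac:(rewrite Nw; exact Hh1)) as [fgw Lip]. rewrite Nw in Lip. fold a in Lip.
  set (k := Csub (g w) a) in *.
  assert (Hk : Cnorm k < d1).
  { apply Rle_lt_trans with ((K + 1) * Cnorm h); [pose proof (Cnorm_nonneg h); nra|].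
    apply (Rmult_lt_reg_r (/ (K + 1))); [apply Rinv_0_lt_compat; lra|].
    replace ((K + 1) * Cnorm h * / (K + 1)) with (Cnorm h) by (field; lra). exact Hh2. }
  specialize (H1 k Hk).
  replace (Cadd a k) with (g w) in H1 by (unfold k; ceq). rewrite fgw, fa, Nw in H1.
  assert (E : Csub k (Cmul (Cinv A) h) = Cscal (-1) (Cmul (Cinv A) (Csub h (Cmul A k)))).
  { transitivity (Csub (Cmul (Cmul (Cinv A) A) k) (Cmul (Cinv A) h)); [|ceq].
    rewrite Cinv_l by auto. unfold Cone; ceq. }
  rewrite E, Cnorm_opp, Cnorm_mul, Cnorm_Cinv by auto.
  apply Rle_trans with (/ Cnorm A * (eps' * (K * Cnorm h))).
  - apply Rmult_le_compat_l; [left; apply Rinv_0_lt_compat; lra|].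
    eapply Rle_trans; [exact H1|]. apply Rmult_le_compat_l; lra.
  - unfold eps'. pose proof (Cnorm_nonneg h).
    replace (/ Cnorm A * (eps * Cnorm A / (K + 1) * (K * Cnorm h))) with (eps * Cnorm h * (K / (K + 1)))
      by (field; lra).
    assert (K / (K + 1) <= 1) by (apply (Rmult_le_reg_r (K + 1)); [lra|]; field_simplify; lra).
    assert (0 <= eps * Cnorm h) by nra. nra.
Qed.

Lemma inverse_deriv f D L W g z :
  copen L -> copen W ->
  (forall x, has_cderiv f x (D x)) -> ccont D (g z) ->
  (forall x y, L x -> L y -> f x = f y -> x = y) ->
  (forall w, W w -> L (g w) /\ f (g w) = w) ->
  W z -> 0 < Cnorm (D (g z)) ->
  has_cderiv g z (Cinv (D (g z))).
Proof.
  intros HLo HWo Hd Hc Hinj Hg Hz HA.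
  destruct (inverse_local_lipschitz f D L W g z HLo HWo Hd Hc Hinj Hg Hz HA) as [rho [Hrho Hloc]].
  apply (cderiv_inverse f g z (D (g z)) rho (2 / Cnorm (D (g z)))); auto.
  - left. apply Rdiv_lt_0_compat; lra.
  - intros w Hw. destruct (Hloc w Hw) as [Ww Lip]. split; [apply Hg; exact Ww|exact Lip].
Qed.

(* For h = w - z, apply the mean value theorem
   on [z, w] to Re (c conj(h) F): its increment is |h|^2 Re (c F'(p)) > 0. *)
Lemma convex_injective (F DF : Cplx -> Cplx) (V : cset) (c : Cplx) :
  convex V ->
  (forall z, V z -> has_cderiv F z (DF z)) ->
  (forall z, V z -> 0 < Re (Cmul c (DF z))) ->
  forall z w, V z -> V w -> F z = F w -> z = w.
Proof.
  intros Hconv Hd Hpos z w Hz Hw Heq.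
  set (h := Csub w z).
  destruct (Rle_lt_or_eq_dec 0 (Cnorm h) (Cnorm_nonneg h)) as [Hh|Hh];
    [exfalso|symmetry; apply Cnorm_sub_eq0; auto].
  destruct (seg_mvt F (fun t => DF (Cadd z (Cscal t h))) z h (Cmul c (Cconj h))) as [t [Ht E]].
  { intros t Ht. apply Hd, Hconv; auto. }
  replace (Cadd z h) with w in E by (unfold h; ceq). rewrite Heq in E.
  set (p := Cadd z (Cscal t h)) in E.
  assert (Vp : V p) by (apply Hconv; auto; lra).
  pose proof (Hpos p Vp).
  replace (Re (Cmul (Cmul c (Cconj h)) (Cmul (DF p) h))) with (Cnorm h * Cnorm h * Re (Cmul c (DF p)))
    in E by (rewrite Cnorm_sq; unfold Cconj; cunf; simpl; ring).
  replace (Re (Cmul (Cmul c (Cconj h)) (Csub (F w) (F w)))) with 0 in E by (cunf; simpl; ring).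
  assert (0 < Cnorm h * Cnorm h * Re (Cmul c (DF p)))
    by (apply Rmult_lt_0_compat; [apply Rmult_lt_0_compat|]; assumption).
  lra.
Qed.

(* cos >= 1/2 on [-pi/4, pi/4], from the degree-2 Taylor lower bound. *)
Lemma cos_ge_half y : Rabs y <= PI / 4 -> 1 / 2 <= cos y.
Proof.
  intros Hy. pose proof PI_4. pose proof PI_RGT_0.
  assert (- (PI / 4) <= y <= PI / 4) by (pose proof (Rle_abs y); pose proof (Rle_abs (- y));
                                         rewrite Rabs_Ropp in *; lra).
  destruct (cos_bound y 0 ltac:(lra) ltac:(lra)) as [Hc _].
  unfold cos_approx, cos_term in Hc. simpl in Hc. nra.
Qed.

(* In the strip a0 <= Im p <= a0 + pi/2 of the right half-plane, the rotation by
   e^{-i (a0 + pi/4)} turns e^p into a number of real part > 1/2, which absorbs any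
   perturbation q with |q| < 1/2. *)
Lemma strip_rotation_positive a0 p q :
  a0 <= Im p <= a0 + PI / 2 -> 0 < Re p -> Cnorm q < 1 / 2 ->
  0 < Re (Cmul (Cexp (0, - (a0 + PI / 4))) (Cadd (Cexp p) q)).
Proof.
  intros Hs Hre Hq.
  set (E := Cexp (0, - (a0 + PI / 4))).
  assert (NE : Cnorm E = 1) by (unfold E; rewrite Cnorm_Cexp; apply exp_0).
  assert (Rot : Re (Cmul E (Cexp p)) = exp (Re p) * cos (Im p - (a0 + PI / 4))).
  { unfold E, Cexp, Cmul, Re, Im; simpl. rewrite exp_0. unfold Rminus. rewrite cos_plus. ring. }
  assert (Hc : 1 / 2 <= cos (Im p - (a0 + PI / 4))) by (apply cos_ge_half, Rabs_le; lra).
  assert (He : 1 < exp (Re p)) by (rewrite <- exp_0; apply exp_increasing; lra).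
  assert (Hq' : - (1 / 2) < Re (Cmul E q)).
  { pose proof (Cnorm_fst (Cmul E q)) as B. rewrite Cnorm_mul, NE in B.
    pose proof (Rle_abs (- fst (Cmul E q))). rewrite Rabs_Ropp in *. unfold Re. lra. }
  replace (Re (Cmul E (Cadd (Cexp p) q))) with (Re (Cmul E (Cexp p)) + Re (Cmul E q))
    by (unfold Re, Cmul, Cadd; simpl; ring).
  rewrite Rot. nra.
Qed.

(* e > 5/2, from e = (e^{1/8})^8 >= (9/8)^8. *)
Lemma exp1_big : 5 / 2 < exp 1.
Proof.
  pose proof (exp_ineq1_le (/ 8)) as H.
  assert (E1 : exp (/ 4) = exp (/ 8) * exp (/ 8)) by (rewrite <- exp_plus; f_equal; field).
  assert (E2 : exp (/ 2) = exp (/ 4) * exp (/ 4)) by (rewrite <- exp_plus; f_equal; field).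
  assert (E3 : exp 1 = exp (/ 2) * exp (/ 2)) by (rewrite <- exp_plus; f_equal; field).
  set (y := exp (/ 8)) in *.
  assert (y * y >= 81 / 64) by nra.
  assert (exp (/ 4) * exp (/ 4) >= (81 / 64) * (81 / 64)) by (rewrite E1; nra).
  assert (exp (/ 2) * exp (/ 2) >= ((81 / 64) * (81 / 64)) * ((81 / 64) * (81 / 64)))
    by (rewrite E2 in *; nra).
  rewrite E3. nra.
Qed.

(* The chain rule (E^{n+1})' = e^{E^n} (E^n)' + 1 together with |e^{E^n}| > e^xi > 5/2
   gives the growth of the derivative. *)
Lemma En_succ_deriv_bound n k xi : 1 < xi -> xi < Re (En n k) -> 2 < Cnorm (Dn n k) ->
  Cnorm (Dn (S n) k) > exp xi * Cnorm (Dn n k) - 1 /\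
  exp xi * Cnorm (Dn n k) - 1 > 2 * Cnorm (Dn n k).
Proof.
  intros Hxi Hre HD. simpl Dn.
  pose proof (Cnorm_rev (Cmul (Cexp (En n k)) (Dn n k)) Cone) as T.
  rewrite Cnorm_mul, Cnorm_Cexp, Cnorm_C1 in T.
  assert (exp xi < exp (fst (En n k))) by (apply exp_increasing; exact Hre).
  assert (exp 1 < exp xi) by (apply exp_increasing; lra).
  pose proof exp1_big. split; nra.
Qed.

Lemma inverse_branch (f : Cplx -> Cplx) (U W : cset) :
  conformal_iso f U W -> exists g, forall w, W w -> U (g w) /\ f (g w) = w.
Proof.
  intros [_ [_ [_ Hsurj]]].
  exists (fun w => epsilon (inhabits Czero) (fun k => W w -> U k /\ f k = w)).
  intros w Hw. apply (epsilon_spec (inhabits Czero) (fun k => W w -> U k /\ f k = w)); auto.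
  destruct (Hsurj w Hw) as [k Hk]. exists k. auto.
Qed.

Section NextIterate.
Variables (n : nat) (Lam V : cset) (xi : R) (g : Cplx -> Cplx).
Hypothesis Lam_open : copen Lam.
Hypothesis V_open : copen V.
Hypothesis En_maps : forall k, Lam k -> V (En n k).
Hypothesis En_inj : forall k1 k2, Lam k1 -> Lam k2 -> En n k1 = En n k2 -> k1 = k2.
Hypothesis Dn_big : forall k, Lam k -> 2 < Cnorm (Dn n k).
Hypothesis V_right : forall z, V z -> Re z > xi.
Hypothesis xi_pos : 0 < xi.
Hypothesis V_convex : convex V.
Hypothesis V_strip : in_horizontal_strip V (PI / 2).
Hypothesis g_inverse : forall z, V z -> Lam (g z) /\ En n (g z) = z.

(* E^{n,n+1} = E^{n+1} o (E^n)^{-1}, i.e. z |-> e^z + (E^n)^{-1}(z). *)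
Definition Enn1 (z : Cplx) : Cplx := Cadd (Cexp z) (g z).

Lemma g_En k : Lam k -> g (En n k) = k.
Proof. intros Hk. destruct (g_inverse _ (En_maps k Hk)) as [L E]. apply En_inj; auto. Qed.

Lemma En_succ_factor k : Lam k -> En (S n) k = Enn1 (En n k).
Proof. intros Hk. unfold Enn1. rewrite g_En by exact Hk. reflexivity. Qed.

(* By the inverse function theorem, (E^{n,n+1})'(z) = e^z + 1 / (E^n)'(g z). *)
Lemma Enn1_deriv z : V z -> has_cderiv Enn1 z (Cadd (Cexp z) (Cinv (Dn n (g z)))).
Proof.
  intros Hz. apply cderiv_add; [apply cderiv_exp|].
  apply (inverse_deriv (En n) (Dn n) Lam V); auto using En_deriv, Dn_cont.
  pose proof (Dn_big _ (proj1 (g_inverse z Hz))). lra.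
Qed.

(* Since |1 / (E^n)'| < 1/2, the rotated derivative has positive real part on the strip. *)
Lemma Enn1_injective : forall z w, V z -> V w -> Enn1 z = Enn1 w -> z = w.
Proof.
  destruct V_strip as [a0 Ha0].
  apply (convex_injective Enn1 (fun z => Cadd (Cexp z) (Cinv (Dn n (g z)))) V
           (Cexp (0, - (a0 + PI / 4))) V_convex Enn1_deriv).
  intros p Vp. apply strip_rotation_positive.
  - apply Ha0, Vp.
  - pose proof (V_right p Vp). lra.
  - apply Cnorm_Cinv_lt_half, Dn_big, g_inverse, Vp.
Qed.

(* |(E^{n,n+1})'(z)| >= |e^z| - 1/2 > e^xi - 1. *)
Lemma Enn1_deriv_bound z d : V z -> has_cderiv Enn1 z d -> Cnorm d > exp xi - 1.
Proof.
  intros Hz Hd. rewrite (cderiv_unique _ _ _ _ Hd (Enn1_deriv z Hz)).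
  pose proof (Cnorm_rev (Cexp z) (Cinv (Dn n (g z)))) as T. rewrite Cnorm_Cexp in T.
  pose proof (Cnorm_Cinv_lt_half _ (Dn_big _ (proj1 (g_inverse z Hz)))).
  assert (exp xi < exp (fst z)) by (apply exp_increasing, V_right, Hz).
  lra.
Qed.

Lemma Enn1_conformal : conformal_iso Enn1 V (image (En (S n)) Lam).
Proof.
  split; [|split; [|split]].
  - intros z Hz. eexists. apply Enn1_deriv, Hz.
  - intros z Hz. destruct (g_inverse z Hz) as [L E]. exists (g z); split; [exact L|].
    rewrite En_succ_factor, E by exact L. reflexivity.
  - exact Enn1_injective.
  - intros w [k [Lk Ek]]. exists (En n k); split; [apply En_maps, Lk|].
    rewrite <- Ek, En_succ_factor by exact Lk. reflexivity.
Qed.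

Lemma En_succ_conformal : conformal_iso (En (S n)) Lam (image (En (S n)) Lam).
Proof.
  split; [|split; [|split]].
  - intros k _. eexists. apply En_deriv.
  - intros k Hk. exists k; auto.
  - intros k1 k2 H1 H2 Heq. rewrite !En_succ_factor in Heq by assumption.
    apply En_inj; auto. apply Enn1_injective; auto.
  - intros w Hw. exact Hw.
Qed.

End NextIterate.

Theorem lemma2p1 (n : nat) (Lam V : cset) (xi : R) :
  domain Lam -> domain V ->
  conformal_iso (En n) Lam V ->
  1 < xi ->
  (forall z, V z -> Re z > xi) ->
  (forall k d, Lam k -> has_cderiv (En n) k d -> Cnorm d > 2) ->
  convex V ->
  in_horizontal_strip V (PI / 2) ->
  conformal_iso (En (S n)) Lam (image (En (S n)) Lam) /\
  (forall k d0 d1, Lam k -> has_cderiv (En n) k d0 -> has_cderiv (En (S n)) k d1 ->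
     Cnorm d1 > exp xi * Cnorm d0 - 1 /\ exp xi * Cnorm d0 - 1 > 2 * Cnorm d0) /\
  (* g is the inverse (E^n)^{-1} : V -> Lam; E^{n,n+1}(z) = e^z + g z *)
  (forall g : Cplx -> Cplx, (forall z, V z -> Lam (g z) /\ En n (g z) = z) ->
     conformal_iso (fun z => Cadd (Cexp z) (g z)) V (image (En (S n)) Lam) /\
     (forall z d, V z -> has_cderiv (fun z => Cadd (Cexp z) (g z)) z d ->
        Cnorm d > exp xi - 1)).
Proof.
  intros [_ [Lam_open _]] [_ [V_open _]] HEn Hxi HRe HD0 Hconv Hstrip.
  destruct (inverse_branch _ _ _ HEn) as [g0 Hg0].
  destruct HEn as [_ [En_maps [En_inj _]]].
  assert (HD : forall k, Lam k -> 2 < Cnorm (Dn n k)) by (intros k Hk; apply (HD0 k); auto using En_deriv).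
  assert (Hxi0 : 0 < xi) by lra.
  split; [|split].
  - exact (En_succ_conformal n Lam V xi g0 Lam_open V_open En_maps En_inj HD HRe Hxi0
             Hconv Hstrip Hg0).
  - intros k d0 d1 Hk H0 H1.
    rewrite (cderiv_unique _ _ _ _ H0 (En_deriv n k)), (cderiv_unique _ _ _ _ H1 (En_deriv (S n) k)).
    apply En_succ_deriv_bound; auto. apply HRe, En_maps, Hk.
  - intros g Hg. split.
    + exact (Enn1_conformal n Lam V xi g Lam_open V_open En_maps En_inj HD HRe Hxi0
               Hconv Hstrip Hg).
    + exact (Enn1_deriv_bound n Lam V xi g Lam_open V_open En_inj HD HRe Hg).
Qed.
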